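(* Let $\lambda\in\mathbb{C}$ with $|\lambda|>1$, and let $g,h\in \mathrm{SL}(2,\mathbb{C})$ be $$g=\begin{pmatrix}\lambda&0\\0&\lambda^{-1}\end{pmatrix},\qquad h=\begin{pmatrix}a&b\\c&d\end{pmatrix}.$$ Put $M_g=|\lambda-1|+|\lambda^{-1}-1|$ and suppose $M_g<1$. If the subgroup $\langle g,h\rangle$ is discrete and non-elementary, then $$|abcd|^{1/2}\neq \frac{1-M_g}{M_g^2}.$$
   Context: A subgroup of $\mathrm{SL}(2,\mathbb{C})$ is discrete if it is discrete in the matrix topology. It is elementary if its action on $\mathbb{H}^3\cup\partial\mathbb{H}^3$ (via Möbius transformations) has a finite orbit; otherwise it is non-elementary. Since $|\lambda|>1$, $g$ is loxodromic. *)

From Stdlib Require Import Reals List.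
Open Scope R_scope.

Definition Cpx := (R * R)%type.
Definition Cre (z : Cpx) : R := fst z.
Definition Cim (z : Cpx) : R := snd z.
Definition Czero : Cpx := (0, 0).
Definition Cone : Cpx := (1, 0).
Definition Cadd (z w : Cpx) : Cpx := (fst z + fst w, snd z + snd w).
Definition Copp (z : Cpx) : Cpx := (- fst z, - snd z).
Definition Csub (z w : Cpx) : Cpx := Cadd z (Copp w).
Definition Cmul (z w : Cpx) : Cpx :=
  (fst z * fst w - snd z * snd w, fst z * snd w + snd z * fst w).
Definition Cconj (z : Cpx) : Cpx := (fst z, - snd z).
Definition Cnorm2 (z : Cpx) : R := fst z * fst z + snd z * snd z.
Definition Cmod (z : Cpx) : R := sqrt (Cnorm2 z).
Definition Cinv (z : Cpx) : Cpx := (fst z / Cnorm2 z, - snd z / Cnorm2 z).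
Definition Cdiv (z w : Cpx) : Cpx := Cmul z (Cinv w).
Definition RtoC (r : R) : Cpx := (r, 0).

Record Mat := mkMat { m11 : Cpx; m12 : Cpx; m21 : Cpx; m22 : Cpx }.

Definition Mmul (A B : Mat) : Mat :=
  mkMat (Cadd (Cmul (m11 A) (m11 B)) (Cmul (m12 A) (m21 B)))
        (Cadd (Cmul (m11 A) (m12 B)) (Cmul (m12 A) (m22 B)))
        (Cadd (Cmul (m21 A) (m11 B)) (Cmul (m22 A) (m21 B)))
        (Cadd (Cmul (m21 A) (m12 B)) (Cmul (m22 A) (m22 B))).
Definition Mid : Mat := mkMat Cone Czero Czero Cone.
Definition Mdet (A : Mat) : Cpx := Csub (Cmul (m11 A) (m22 A)) (Cmul (m12 A) (m21 A)).
Definition Minv_SL (A : Mat) : Mat := mkMat (m22 A) (Copp (m12 A)) (Copp (m21 A)) (m11 A).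

Definition in_SL2C (A : Mat) : Prop := Mdet A = Cone.

(** distance on matrices (entrywise l^1 norm, inducing the matrix topology) *)
Definition Mdist (A B : Mat) : R :=
  Cmod (Csub (m11 A) (m11 B)) + Cmod (Csub (m12 A) (m12 B)) +
  Cmod (Csub (m21 A) (m21 B)) + Cmod (Csub (m22 A) (m22 B)).

Inductive gen2 (g h : Mat) : Mat -> Prop :=
  | gen_id : gen2 g h Mid
  | gen_g : gen2 g h g
  | gen_h : gen2 g h h
  | gen_ginv : gen2 g h (Minv_SL g)
  | gen_hinv : gen2 g h (Minv_SL h)
  | gen_mul : forall A B, gen2 g h A -> gen2 g h B -> gen2 g h (Mmul A B).

Definition discrete (G : Mat -> Prop) : Prop :=
  forall A, G A -> exists eps, eps > 0 /\
    forall B, G B -> B <> A -> Mdist A B >= eps.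

(** Points of H^3 ∪ ∂H^3 in the upper half-space model:
    HPt z t = z + t j (with t > 0), BPt z = z ∈ C, Inf = ∞. *)
Inductive point := HPt (z : Cpx) (t : R) | BPt (z : Cpx) | Inf.

Definition valid_point (p : point) : Prop :=
  match p with HPt _ t => t > 0 | _ => True end.

(** Möbius action of A = [[a,b],[c,d]] : q ↦ (aq+b)(cq+d)^{-1}
    (Poincaré extension on H^3, fractional linear map on C ∪ {∞}). *)
Definition act (A : Mat) (p : point) : point :=
  let a := m11 A in let b := m12 A in let c := m21 A in let d := m22 A in
  match p with
  | HPt z t =>
      let w := Cadd (Cmul c z) d in
      let D := Cnorm2 w + Cnorm2 c * (t * t) in
      HPt (Cmul (RtoC (/ D))
             (Cadd (Cmul (Cadd (Cmul a z) b) (Cconj w))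
                   (Cmul (Cmul a (Cconj c)) (RtoC (t * t)))))
          (t / D)
  | BPt z =>
      let w := Cadd (Cmul c z) d in
      if Req_EM_T (fst w) 0 then
        if Req_EM_T (snd w) 0 then Inf
        else BPt (Cdiv (Cadd (Cmul a z) b) w)
      else BPt (Cdiv (Cadd (Cmul a z) b) w)
  | Inf =>
      if Req_EM_T (fst c) 0 then
        if Req_EM_T (snd c) 0 then Inf else BPt (Cdiv a c)
      else BPt (Cdiv a c)
  end.

Definition elementary (G : Mat -> Prop) : Prop :=
  exists p : point, valid_point p /\
    exists l : list point, forall A, G A -> In (act A p) l.

Definition non_elementary (G : Mat -> Prop) : Prop := ~ elementary G.

From Pilot Require Import Defs.
From Stdlib Require Import Reals List Lra Lia Classical_Prop.
From Coquelicot Require Complex.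
Open Scope R_scope.

(* Proof idea (Jørgensen's iteration): put h_0 = h, h_(n+1) = h_n g h_n^-1.
   With beta_n the product of the off-diagonal entries of h_n and
   delta = |lambda - lambda^-1| <= M_g, one has beta_1 = abcd (lambda - lambda^-1)^2 and
   beta_(n+1) = -(1 + beta_n) beta_n (lambda - lambda^-1)^2, so as soon as
   |abcd|^(1/2) <= (1 - M_g)/M_g^2 the sequence beta_n decays geometrically.  Then the
   off-diagonal entries of h_n, rescaled by lambda^(-n) and lambda^n, decay geometrically
   as well, i.e. g^-k h_(2k) g^k tends to g.  Discreteness forces g^-k h_(2k) g^k = g for
   large k, so h_(2k) is diagonal; walking the recursion back down, h is diagonal or
   antidiagonal, and then <g, h> permutes {0, oo}, so it is elementary. *)

Definition vanishing (u : nat -> R) : Prop :=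
  forall eps, 0 < eps -> exists N, forall n, (N <= n)%nat -> u n <= eps.

Lemma vanishing_of_contraction (u : nat -> R) (r : R) (N : nat) :
  (forall n, 0 <= u n) -> 0 <= r < 1 ->
  (forall n, (N <= n)%nat -> u (S n) <= r * u n) -> vanishing u.
Proof.
  intros u_ge0 r_bounds u_step eps eps_gt0.
  assert (u_geom : forall k, u (N + k)%nat <= r ^ k * u N).
  { induction k as [|k IHk].
    - rewrite Nat.add_0_r; lra.
    - rewrite Nat.add_succ_r; simpl.
      apply Rle_trans with (r * u (N + k)%nat); [apply u_step; lia | nra]. }
  assert (ratio_gt0 : 0 < eps / (u N + 1))
    by (apply Rdiv_lt_0_compat; [| pose proof (u_ge0 N)]; lra).
  destruct (pow_lt_1_zero r ltac:(rewrite Rabs_pos_eq; lra) _ ratio_gt0) as [K HK].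
  exists (N + K)%nat; intros n Hn.
  replace n with (N + (n - N))%nat by lia.
  specialize (HK (n - N)%nat ltac:(lia)).
  rewrite Rabs_pos_eq in HK by (apply pow_le; lra).
  assert (eps / (u N + 1) * u N <= eps).
  { pose proof (u_ge0 N).
    apply Rmult_le_reg_r with (u N + 1); [lra|].
    replace (eps / (u N + 1) * u N * (u N + 1)) with (eps * u N) by (field; lra).
    nra. }
  pose proof (u_geom (n - N)%nat); pose proof (u_ge0 N); nra.
Qed.

Lemma vanishing_of_quadratic_recursion (v : nat -> R) (d : R) :
  (forall n, 0 <= v n) -> 0 <= d ->
  (forall n, v (S n) <= v n * (1 + v n) * d) -> (1 + v 1%nat) * d < 1 ->
  vanishing v.
Proof.
  intros v_ge0 d_ge0 v_step contracting.
  assert (step_le : forall n, v n <= v 1%nat ->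
            v (S n) <= v n * ((1 + v 1%nat) * d)).
  { intros n vn_le; apply Rle_trans with (v n * (1 + v n) * d); [apply v_step|].
    rewrite Rmult_assoc; apply Rmult_le_compat_l; [auto|].
    apply Rmult_le_compat_r; lra. }
  assert (v_le_v1 : forall n, v (S n) <= v 1%nat).
  { induction n as [|n IHn]; [lra|].
    pose proof (step_le (S n) IHn); pose proof (v_ge0 (S n)); nra. }
  apply (vanishing_of_contraction v ((1 + v 1%nat) * d) 1); auto.
  - pose proof (v_ge0 1%nat); split; nra.
  - intros [|n] Hn; [lia|].
    rewrite Rmult_comm; apply step_le, v_le_v1.
Qed.

Lemma vanishing_of_perturbed_contraction (u v : nat -> R) (k delta : R) :
  (forall n, 0 <= u n) -> (forall n, 0 <= v n) -> 0 <= k -> 0 <= delta < 1 ->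
  vanishing v ->
  (forall n, u (S (S n)) <= (1 + k * v n) * delta * u (S n)) ->
  vanishing u.
Proof.
  intros u_ge0 v_ge0 k_ge0 delta_bounds v_vanishing u_step.
  set (eps := (1 - delta) / (2 * (k + 1))).
  assert (eps_gt0 : 0 < eps) by (apply Rdiv_lt_0_compat; lra).
  assert (k_eps : k * eps <= (1 - delta) / 2).
  { unfold eps; apply Rmult_le_reg_r with (2 * (k + 1)); [lra|].
    replace (k * ((1 - delta) / (2 * (k + 1))) * (2 * (k + 1))) with (k * (1 - delta))
      by (field; lra).
    replace ((1 - delta) / 2 * (2 * (k + 1))) with ((k + 1) * (1 - delta)) by field.
    nra. }
  destruct (v_vanishing eps eps_gt0) as [N HN].
  apply (vanishing_of_contraction u ((1 + delta) / 2) (S N)); [auto | lra |].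
  intros [|n] Hn; [lia|].
  specialize (HN n ltac:(lia)); pose proof (v_ge0 n); pose proof (u_ge0 (S n)).
  apply Rle_trans with ((1 + k * v n) * delta * u (S n)); [apply u_step|].
  apply Rmult_le_compat_r; [auto|].
  assert (k * v n <= k * eps) by (apply Rmult_le_compat_l; lra).
  nra.
Qed.

Lemma seed_contracting (X delta M : R) :
  0 < delta <= M -> M < 1 -> 0 <= X -> sqrt X <= (1 - M) / (M * M) ->
  (1 + X * (delta * delta)) * (delta * delta) < 1.
Proof.
  intros delta_bounds M_lt1 X_ge0 sqrtX_le.
  set (t := (1 - M) / (M * M)) in sqrtX_le.
  assert (tMM : t * (M * M) = 1 - M) by (unfold t; field; lra).
  assert (X_le : X <= t * t).
  { rewrite <- (sqrt_sqrt X X_ge0); pose proof (sqrt_pos X); nra. }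
  assert (dd_le : delta * delta <= M * M) by nra.
  assert (X * (delta * delta) <= t * t * (M * M)) by nra.
  assert (t * t * (M * M) * (M * M) = (1 - M) * (1 - M)) by nra.
  nra.
Qed.

Module Jorgensen.
Import Complex.
Open Scope C_scope.

(* Defs and Coquelicot both model C as pairs of reals and their ring operations agree
   definitionally; only the inverse and the modulus are written differently. *)
Lemma Cinv_Coquelicot (z : Cpx) : Defs.Cinv z = / z.
Proof.
  destruct z as [x y]; unfold Defs.Cinv, Complex.Cinv, Cnorm2; simpl.
  f_equal; f_equal; ring.
Qed.

Lemma Cmod_Coquelicot (z : Cpx) : Defs.Cmod z = Cmod z.
Proof. destruct z as [x y]; unfold Defs.Cmod, Complex.Cmod, Cnorm2; simpl; f_equal; ring. Qed.

Ltac to_coquelicot := repeat match goal with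
  | |- context [Defs.Cadd ?x ?y] => change (Defs.Cadd x y) with (x + y)
  | |- context [Defs.Cmul ?x ?y] => change (Defs.Cmul x y) with (x * y)
  | |- context [Defs.Csub ?x ?y] => change (Defs.Csub x y) with (x - y)
  | |- context [Defs.Copp ?x] => change (Defs.Copp x) with (- x)
  | |- context [Czero] => change Czero with (RtoC 0)
  | |- context [Cone] => change Cone with (RtoC 1)
  | |- context [Defs.Cinv ?x] => rewrite (Cinv_Coquelicot x)
  | |- context [Defs.Cmod ?x] => rewrite (Cmod_Coquelicot x)
  end.

Ltac C_ring :=
  to_coquelicot;
  first [reflexivity | match goal with |- @eq _ ?x ?y => change (@eq C x y) end; ring].

Lemma Mat_ext (A B : Mat) :
  m11 A = m11 B -> m12 A = m12 B -> m21 A = m21 B -> m22 A = m22 B -> A = B.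
Proof. destruct A, B; simpl; intros; subst; reflexivity. Qed.

Ltac Mat_ring := apply Mat_ext; simpl; C_ring.

Lemma Minv_SL_Mmul (A B : Mat) : Minv_SL (Mmul A B) = Mmul (Minv_SL B) (Minv_SL A).
Proof. destruct A, B; unfold Mmul, Minv_SL; Mat_ring. Qed.

Lemma Minv_SL_Mid : Minv_SL Mid = Mid.
Proof. Mat_ring. Qed.

Lemma Minv_SL_involutive (A : Mat) : Minv_SL (Minv_SL A) = A.
Proof. destruct A; Mat_ring. Qed.

Lemma gen2_Minv_SL (g h X : Mat) : gen2 g h X -> gen2 g h (Minv_SL X).
Proof.
  induction 1.
  - rewrite Minv_SL_Mid; constructor.
  - apply gen_ginv.
  - apply gen_hinv.
  - rewrite Minv_SL_involutive; constructor.
  - rewrite Minv_SL_involutive; constructor.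
  - rewrite Minv_SL_Mmul; apply gen_mul; auto.
Qed.

Definition diagonal (X : Mat) : Prop := m12 X = 0 :> C /\ m21 X = 0 :> C.
Definition antidiagonal (X : Mat) : Prop := m11 X = 0 :> C /\ m22 X = 0 :> C.

Lemma gen2_diagonal_or_antidiagonal (g h : Mat) :
  diagonal g -> diagonal h \/ antidiagonal h ->
  forall X, gen2 g h X -> diagonal X \/ antidiagonal X.
Proof.
  intros [g12 g21] Hh X HX; unfold diagonal, antidiagonal in *.
  induction HX as [| | | | |X Y _ IHX _ IHY].
  - left; split; reflexivity.
  - left; auto.
  - exact Hh.
  - left; simpl; rewrite g12, g21; split; C_ring.
  - destruct Hh as [[H1 H2]|[H1 H2]]; [left|right]; simpl; rewrite H1, H2; split; C_ring.
  - destruct X as [x1 x2 x3 x4], Y as [y1 y2 y3 y4]; simpl in *.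
    destruct IHX as [[-> ->]|[-> ->]], IHY as [[-> ->]|[-> ->]];
      [left|right|right|left]; split; C_ring.
Qed.

Lemma Cdiv_0_l (z : Cpx) : Defs.Cdiv (RtoC 0) z = Czero.
Proof. unfold Defs.Cdiv; C_ring. Qed.

Lemma elementary_of_diagonal_or_antidiagonal (g h : Mat) :
  diagonal g -> diagonal h \/ antidiagonal h -> elementary (gen2 g h).
Proof.
  intros Hg Hh; exists Inf; split; [exact I|].
  exists (Inf :: BPt Czero :: nil); intros X HX.
  destruct (gen2_diagonal_or_antidiagonal g h Hg Hh X HX) as [[_ X21]|[X11 _]];
    unfold act; rewrite ?X21, ?X11; simpl.
  - destruct (Req_EM_T 0 0); [|lra]; destruct (Req_EM_T 0 0); [left; reflexivity | lra].
  - destruct (Req_EM_T _ 0); [destruct (Req_EM_T _ 0)|]; rewrite ?Cdiv_0_l; auto.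
Qed.


Lemma Cmult_integral (x y : C) : x * y = 0 -> x = 0 \/ y = 0.
Proof.
  intro xy0.
  assert (Cmod x * Cmod y = 0)%R by (rewrite <- Cmod_mult, xy0; apply Cmod_0).
  destruct (Rmult_integral _ _ H); [left | right]; apply Cmod_eq_0; auto.
Qed.

Lemma Cmult_eq0_r (x y : C) : x * y = 0 -> y <> 0 -> x = 0.
Proof. intros xy0 y_neq0; destruct (Cmult_integral _ _ xy0); [assumption | contradiction]. Qed.

Lemma Cmod_0_sub (x : C) : Cmod (0 - x) = Cmod x.
Proof. rewrite <- Cmod_opp; f_equal; ring. Qed.

Lemma Cmod_1_plus_le (x : C) : (Cmod (1 + x) <= 1 + Cmod x)%R.
Proof. rewrite <- Cmod_1 at 2; apply Cmod_triangle. Qed.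

Section JorgensenSequence.

Variables L a b c d : C.
Hypothesis L_gt1 : (1 < Cmod L)%R.
Hypothesis det_h : a * d - b * c = 1.

Definition gM : Mat := mkMat L (RtoC 0) (RtoC 0) (/ L).
Definition hM : Mat := mkMat a b c d.

Fixpoint jseq (n : nat) : Mat :=
  match n with
  | O => hM
  | S n => Mmul (Mmul (jseq n) gM) (Minv_SL (jseq n))
  end.

Lemma L_neq0 : L <> 0.
Proof. intro L0; rewrite L0, Cmod_0 in L_gt1; lra. Qed.

Lemma Cmod_L_mul_L_neq1 : (Cmod (L * L) <> 1)%R.
Proof. rewrite Cmod_mult; pose proof (Cmod_ge_0 L); nra. Qed.

Lemma L_sub_inv_neq0 : L - / L <> 0.
Proof.
  intro E; apply Cmod_L_mul_L_neq1.
  replace (L * L) with (RtoC 1); [apply Cmod_1|].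
  transitivity (L * (L - / L) + 1); [rewrite E; ring | field; apply L_neq0].
Qed.

Lemma L_add_inv_neq0 : L + / L <> 0.
Proof.
  intro E; apply Cmod_L_mul_L_neq1.
  replace (L * L) with (- (1)); [apply Cmod_m1|].
  transitivity (L * (L + / L) - 1); [rewrite E; ring | field; apply L_neq0].
Qed.

Lemma conj_g_det (X : Mat) :
  m11 X * m22 X - m12 X * m21 X = 1 ->
  let Y := Mmul (Mmul X gM) (Minv_SL X) in m11 Y * m22 Y - m12 Y * m21 Y = 1.
Proof.
  destruct X as [x11 x12 x21 x22]; unfold gM; simpl; to_coquelicot; intro detX.
  transitivity ((x11 * x22 - x12 * x21) * (x11 * x22 - x12 * x21));
    [field; apply L_neq0 | rewrite detX; ring].
Qed.

Lemma conj_g_entries (X : Mat) :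
  m11 X * m22 X - m12 X * m21 X = 1 ->
  let Y := Mmul (Mmul X gM) (Minv_SL X) in
  m11 Y = L + m12 X * m21 X * (L - / L) :> C /\
  m12 Y = - (m11 X * m12 X * (L - / L)) :> C /\
  m21 Y = m21 X * m22 X * (L - / L) :> C /\
  m22 Y = / L - m12 X * m21 X * (L - / L) :> C.
Proof.
  destruct X as [x11 x12 x21 x22]; unfold gM; simpl; to_coquelicot; intro detX.
  assert (x11x22 : x11 * x22 = 1 + x12 * x21) by (rewrite <- detX; ring).
  repeat split.
  - transitivity (L * (x11 * x22) - / L * (x12 * x21)); [ring | rewrite x11x22; ring].
  - ring.
  - ring.
  - transitivity (/ L * (x11 * x22) - L * (x12 * x21)); [ring | rewrite x11x22; ring].
Qed.

Lemma jseq_det (n : nat) :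
  m11 (jseq n) * m22 (jseq n) - m12 (jseq n) * m21 (jseq n) = 1.
Proof. induction n as [|n IHn]; [exact det_h | exact (conj_g_det _ IHn)]. Qed.

Lemma jseq_succ (n : nat) :
  let X := jseq n in let Y := jseq (S n) in
  m11 Y = L + m12 X * m21 X * (L - / L) :> C /\
  m12 Y = - (m11 X * m12 X * (L - / L)) :> C /\
  m21 Y = m21 X * m22 X * (L - / L) :> C /\
  m22 Y = / L - m12 X * m21 X * (L - / L) :> C.
Proof. exact (conj_g_entries _ (jseq_det n)). Qed.

Lemma jseq_succ_not_antidiagonal (n : nat) : ~ antidiagonal (jseq (S n)).
Proof.
  intros [Y11 Y22]; destruct (jseq_succ n) as (E11 & _ & _ & E22).
  apply L_add_inv_neq0.
  transitivity (m11 (jseq (S n)) + m22 (jseq (S n))); [rewrite E11, E22; ring|].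
  rewrite Y11, Y22; ring.
Qed.

Lemma jseq_pred_of_diagonal (n : nat) :
  diagonal (jseq (S n)) -> diagonal (jseq n) \/ antidiagonal (jseq n).
Proof.
  intros [Y12 Y21]; destruct (jseq_succ n) as (_ & E12 & E21 & _).
  rewrite E12 in Y12; rewrite E21 in Y21.
  assert (X1112 : m11 (jseq n) * m12 (jseq n) = 0).
  { apply (Cmult_eq0_r _ (L - / L)); [| exact L_sub_inv_neq0].
    transitivity (- - (m11 (jseq n) * m12 (jseq n) * (L - / L))); [ring|].
    rewrite Y12; ring. }
  assert (X2122 : m21 (jseq n) * m22 (jseq n) = 0)
    by (apply (Cmult_eq0_r _ (L - / L)); [exact Y21 | exact L_sub_inv_neq0]).
  pose proof (jseq_det n) as detX.
  destruct (Cmult_integral _ _ X1112) as [X11|X12], (Cmult_integral _ _ X2122) as [X21|X22].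
  - exfalso; apply C1_nz; rewrite <- detX, X11, X21; ring.
  - right; split; assumption.
  - left; split; assumption.
  - exfalso; apply C1_nz; rewrite <- detX, X12, X22; ring.
Qed.

Lemma h_of_jseq_diagonal (n : nat) :
  diagonal (jseq n) -> diagonal hM \/ antidiagonal hM.
Proof.
  induction n as [|n IHn]; intro Yn; [left; exact Yn|].
  destruct (jseq_pred_of_diagonal n Yn) as [Xn|Xn]; [apply IHn, Xn|].
  destruct n as [|n]; [right; exact Xn|].
  exfalso; exact (jseq_succ_not_antidiagonal n Xn).
Qed.

Definition delta : R := Cmod (L - / L).
Definition M : R := Cmod (L - 1) + Cmod (/ L - 1).
Definition offdiag_norm (n : nat) : R := Cmod (m12 (jseq n) * m21 (jseq n)).
Definition scaled12 (n : nat) : R := Cmod (m12 (jseq n)) * Cmod (/ L) ^ n.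
Definition scaled21 (n : nat) : R := Cmod (m21 (jseq n)) * Cmod L ^ n.

Lemma delta_gt0 : (0 < delta)%R.
Proof. apply Cmod_gt_0, L_sub_inv_neq0. Qed.

Lemma delta_le_M : (delta <= M)%R.
Proof.
  unfold delta, M; rewrite <- (Cmod_opp (/ L - 1)).
  replace (L - / L) with ((L - 1) + - (/ L - 1)) by ring.
  apply Cmod_triangle.
Qed.

Lemma offdiag_norm_ge0 (n : nat) : (0 <= offdiag_norm n)%R.
Proof. apply Cmod_ge_0. Qed.

Lemma scaled12_ge0 (n : nat) : (0 <= scaled12 n)%R.
Proof. apply Rmult_le_pos; [| apply pow_le]; apply Cmod_ge_0. Qed.

Lemma scaled21_ge0 (n : nat) : (0 <= scaled21 n)%R.
Proof. apply Rmult_le_pos; [| apply pow_le]; apply Cmod_ge_0. Qed.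

Lemma offdiag_norm_one : offdiag_norm 1 = (Cmod (a * b * c * d) * (delta * delta))%R.
Proof.
  destruct (jseq_succ 0) as (_ & E12 & E21 & _); unfold offdiag_norm, delta.
  rewrite E12, E21; simpl.
  replace (- (a * b * (L - / L)) * (c * d * (L - / L)))
    with (- (a * b * c * d * ((L - / L) * (L - / L)))) by ring.
  rewrite Cmod_opp, !Cmod_mult; ring.
Qed.

Lemma offdiag_norm_succ_le (n : nat) :
  (offdiag_norm (S n) <= offdiag_norm n * (1 + offdiag_norm n) * (delta * delta))%R.
Proof.
  destruct (jseq_succ n) as (_ & E12 & E21 & _); unfold offdiag_norm, delta.
  rewrite E12, E21.
  set (X := jseq n).
  replace (- (m11 X * m12 X * (L - / L)) * (m21 X * m22 X * (L - / L)))
    with (- ((m11 X * m22 X) * (m12 X * m21 X) * ((L - / L) * (L - / L)))) by ring.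
  replace (m11 X * m22 X) with (1 + m12 X * m21 X)
    by (rewrite <- (jseq_det n); unfold X; ring).
  set (beta := m12 X * m21 X).
  rewrite Cmod_opp, !Cmod_mult, (Rmult_comm (Cmod (1 + beta))).
  apply Rmult_le_compat_r; [apply Rmult_le_pos; apply Cmod_ge_0|].
  apply Rmult_le_compat_l; [apply Cmod_ge_0 | apply Cmod_1_plus_le].
Qed.

Lemma jseq11_div_L_le (n : nat) :
  (Cmod (m11 (jseq (S n)) * / L) <= 1 + delta * Cmod (/ L) * offdiag_norm n)%R.
Proof.
  destruct (jseq_succ n) as (E11 & _ & _ & _); rewrite E11.
  set (beta := m12 (jseq n) * m21 (jseq n)).
  replace ((L + beta * (L - / L)) * / L) with (1 + beta * (L - / L) * / L)
    by (field; apply L_neq0).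
  eapply Rle_trans; [apply Cmod_1_plus_le|].
  unfold offdiag_norm, delta; fold beta; rewrite !Cmod_mult; right; ring.
Qed.

Lemma jseq22_mul_L_le (n : nat) :
  (Cmod (m22 (jseq (S n)) * L) <= 1 + delta * Cmod L * offdiag_norm n)%R.
Proof.
  destruct (jseq_succ n) as (_ & _ & _ & E22); rewrite E22.
  set (beta := m12 (jseq n) * m21 (jseq n)).
  replace ((/ L - beta * (L - / L)) * L) with (1 + - (beta * (L - / L) * L))
    by (field; apply L_neq0).
  eapply Rle_trans; [apply Cmod_1_plus_le|].
  unfold offdiag_norm, delta; fold beta; rewrite Cmod_opp, !Cmod_mult; right; ring.
Qed.

Lemma scaled12_succ_succ_le (n : nat) :
  (scaled12 (S (S n))
   <= (1 + delta * Cmod (/ L) * offdiag_norm n) * delta * scaled12 (S n))%R.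
Proof.
  destruct (jseq_succ (S n)) as (_ & E12 & _ & _).
  set (Y := jseq (S n)) in E12.
  apply Rle_trans with
    (Cmod (m11 Y * / L) * (delta * (Cmod (m12 Y) * Cmod (/ L) ^ S n)))%R.
  - unfold scaled12, delta; fold Y; rewrite E12, Cmod_opp, !Cmod_mult; right; simpl; ring.
  - rewrite Rmult_assoc; apply Rmult_le_compat_r.
    + apply Rmult_le_pos; [apply Cmod_ge_0 | apply scaled12_ge0].
    + apply jseq11_div_L_le.
Qed.

Lemma scaled21_succ_succ_le (n : nat) :
  (scaled21 (S (S n))
   <= (1 + delta * Cmod L * offdiag_norm n) * delta * scaled21 (S n))%R.
Proof.
  destruct (jseq_succ (S n)) as (_ & _ & E21 & _).
  set (Y := jseq (S n)) in E21.
  apply Rle_trans with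
    (Cmod (m22 Y * L) * (delta * (Cmod (m21 Y) * Cmod L ^ S n)))%R.
  - unfold scaled21, delta; fold Y; rewrite E21, !Cmod_mult; right; simpl; ring.
  - rewrite Rmult_assoc; apply Rmult_le_compat_r.
    + apply Rmult_le_pos; [apply Cmod_ge_0 | apply scaled21_ge0].
    + apply jseq22_mul_L_le.
Qed.

Lemma offdiag_vanishing :
  (sqrt (Cmod (a * b * c * d)) <= (1 - M) / (M * M))%R -> (M < 1)%R ->
  vanishing offdiag_norm.
Proof.
  intros seed M_lt1; pose proof delta_gt0.
  apply (vanishing_of_quadratic_recursion offdiag_norm (delta * delta)).
  - apply offdiag_norm_ge0.
  - nra.
  - apply offdiag_norm_succ_le.
  - rewrite offdiag_norm_one; apply (seed_contracting _ _ M);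
      [split; [assumption | apply delta_le_M] | assumption | apply Cmod_ge_0 | assumption].
Qed.

Lemma scaled12_vanishing : (M < 1)%R -> vanishing offdiag_norm -> vanishing scaled12.
Proof.
  intros M_lt1 offdiag_van; pose proof delta_gt0; pose proof delta_le_M.
  apply (vanishing_of_perturbed_contraction
           scaled12 offdiag_norm (delta * Cmod (/ L)) delta);
    [apply scaled12_ge0 | apply offdiag_norm_ge0 | | lra | assumption
    | apply scaled12_succ_succ_le].
  apply Rmult_le_pos; [lra | apply Cmod_ge_0].
Qed.

Lemma scaled21_vanishing : (M < 1)%R -> vanishing offdiag_norm -> vanishing scaled21.
Proof.
  intros M_lt1 offdiag_van; pose proof delta_gt0; pose proof delta_le_M.
  apply (vanishing_of_perturbed_contraction scaled21 offdiag_norm (delta * Cmod L) delta);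
    [apply scaled21_ge0 | apply offdiag_norm_ge0 | | lra | assumption
    | apply scaled21_succ_succ_le].
  apply Rmult_le_pos; [lra | apply Cmod_ge_0].
Qed.

Definition gpow (n : nat) : Mat := mkMat (L ^ n) (RtoC 0) (RtoC 0) ((/ L) ^ n).

Definition gconj (n : nat) (X : Mat) : Mat := Mmul (Mmul (Minv_SL (gpow n)) X) (gpow n).

Lemma gpow_in_gen2 (n : nat) : gen2 gM hM (gpow n).
Proof.
  induction n as [|n IHn].
  - replace (gpow 0) with Mid by Mat_ring; constructor.
  - replace (gpow (S n)) with (Mmul gM (gpow n)) by Mat_ring.
    apply gen_mul; [constructor | assumption].
Qed.

Lemma jseq_in_gen2 (n : nat) : gen2 gM hM (jseq n).
Proof.
  induction n as [|n IHn]; simpl.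
  - constructor.
  - apply gen_mul; [apply gen_mul; [assumption | constructor] | apply gen2_Minv_SL, IHn].
Qed.

Lemma gconj_in_gen2 (n : nat) (X : Mat) : gen2 gM hM X -> gen2 gM hM (gconj n X).
Proof.
  intro HX; apply gen_mul; [apply gen_mul; [apply gen2_Minv_SL |] | ]; auto using gpow_in_gen2.
Qed.

Lemma gconj_entries (n : nat) (X : Mat) :
  let K := gconj n X in
  m11 K = m11 X :> C /\ m12 K = (/ L) ^ n * m12 X * (/ L) ^ n :> C /\
  m21 K = L ^ n * m21 X * L ^ n :> C /\ m22 K = m22 X :> C.
Proof.
  pose proof (Cpow_nz L n L_neq0).
  destruct X as [x y u t]; unfold gconj, gpow; simpl; to_coquelicot.
  rewrite Cpow_inv by apply L_neq0.
  repeat split; field; assumption.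
Qed.

Lemma Mdist_g_gconj (k : nat) :
  let m := (S k + S k)%nat in
  Mdist gM (gconj (S k) (jseq m)) =
    (delta * offdiag_norm (k + S k) + scaled12 m + scaled21 m
     + delta * offdiag_norm (k + S k))%R.
Proof.
  intro m.
  destruct (gconj_entries (S k) (jseq m)) as (K11 & K12 & K21 & K22).
  destruct (jseq_succ (k + S k)) as (E11 & _ & _ & E22).
  unfold Mdist; to_coquelicot.
  rewrite K11, K12, K21, K22; change m with (S (k + S k)); rewrite E11, E22.
  change (m11 gM) with L; change (m12 gM) with (RtoC 0);
    change (m21 gM) with (RtoC 0); change (m22 gM) with (/ L).
  set (beta := m12 (jseq (k + S k)) * m21 (jseq (k + S k))).
  replace (L - (L + beta * (L - / L))) with (- (beta * (L - / L))) by ring.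
  replace (/ L - (/ L - beta * (L - / L))) with (beta * (L - / L)) by ring.
  unfold scaled12, scaled21, offdiag_norm, delta; fold beta.
  change (S (k + S k)) with (S k + S k)%nat.
  rewrite !Cmod_0_sub, Cmod_opp, !Cmod_mult, !Cmod_pow, !pow_add; ring.
Qed.

Lemma Cpow_inv_sandwich (n : nat) (x : C) :
  L ^ n * ((/ L) ^ n * x * (/ L) ^ n) * L ^ n = x /\
  (/ L) ^ n * (L ^ n * x * L ^ n) * (/ L) ^ n = x.
Proof.
  pose proof (Cpow_nz L n L_neq0).
  rewrite Cpow_inv by apply L_neq0; split; field; assumption.
Qed.

Lemma diagonal_of_gconj_eq_g (n : nat) (X : Mat) : gconj n X = gM -> diagonal X.
Proof.
  intro KgM; destruct (gconj_entries n X) as (_ & K12 & K21 & _).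
  rewrite KgM in K12, K21; simpl in K12, K21.
  split.
  - rewrite <- (proj1 (Cpow_inv_sandwich n (m12 X))), <- K12; ring.
  - rewrite <- (proj2 (Cpow_inv_sandwich n (m21 X))), <- K21; ring.
Qed.

Lemma elementary_of_discrete :
  (sqrt (Cmod (a * b * c * d)) <= (1 - M) / (M * M))%R -> (M < 1)%R ->
  discrete (gen2 gM hM) -> elementary (gen2 gM hM).
Proof.
  intros seed M_lt1 disc.
  destruct (disc gM (gen_g _ _)) as (eps & eps_gt0 & g_isolated).
  pose proof (offdiag_vanishing seed M_lt1) as offdiag_van.
  assert (eps5_gt0 : (0 < eps / 5)%R) by lra.
  destruct (offdiag_van _ eps5_gt0) as [Nv offdiag_small].
  destruct (scaled12_vanishing M_lt1 offdiag_van _ eps5_gt0) as [Nw scaled12_small].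
  destruct (scaled21_vanishing M_lt1 offdiag_van _ eps5_gt0) as [Nz scaled21_small].
  set (k := (Nv + Nw + Nz)%nat); set (m := (S k + S k)%nat).
  set (K := gconj (S k) (jseq m)).
  assert (K_near_g : (Mdist gM K < eps)%R).
  { unfold K, m; rewrite Mdist_g_gconj.
    specialize (offdiag_small (k + S k)%nat ltac:(unfold k; lia)).
    specialize (scaled12_small (S k + S k)%nat ltac:(unfold k; lia)).
    specialize (scaled21_small (S k + S k)%nat ltac:(unfold k; lia)).
    pose proof delta_gt0; pose proof delta_le_M; pose proof (offdiag_norm_ge0 (k + S k)).
    assert (delta * offdiag_norm (k + S k) <= offdiag_norm (k + S k))%R by nra.
    lra. }
  assert (K_eq_g : K = gM).
  { apply NNPP; intro K_neq_g.
    specialize (g_isolated K (gconj_in_gen2 _ _ (jseq_in_gen2 m)) K_neq_g); lra. }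
  apply elementary_of_diagonal_or_antidiagonal.
  - split; reflexivity.
  - apply (h_of_jseq_diagonal m), (diagonal_of_gconj_eq_g (S k)), K_eq_g.
Qed.

End JorgensenSequence.
End Jorgensen.

Theorem theorem1 (lam a b c d : Cpx) :
  Cmod lam > 1 ->
  in_SL2C (mkMat a b c d) ->
  let g := mkMat lam Czero Czero (Cinv lam) in
  let h := mkMat a b c d in
  let Mg := Cmod (Csub lam Cone) + Cmod (Csub (Cinv lam) Cone) in
  Mg < 1 ->
  discrete (gen2 g h) ->
  non_elementary (gen2 g h) ->
  sqrt (Cmod (Cmul (Cmul (Cmul a b) c) d)) <> (1 - Mg) / (Mg * Mg).
Proof.
  intros lam_gt1 det_h g h Mg Mg_lt1 disc non_elem sqrt_eq.
  subst g h Mg.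
  rewrite Jorgensen.Cinv_Coquelicot, !Jorgensen.Cmod_Coquelicot in *.
  apply non_elem, (Jorgensen.elementary_of_discrete lam a b c d lam_gt1 det_h);
    [apply Req_le, sqrt_eq | assumption | assumption].
Qed.
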